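(* Let $N\ge1$ be an integer and $0<y<1$. Define $\eta\in\mathbb{R}$ by $-\tfrac12\eta^2=\ln[4y(1-y)]$ with $\operatorname{sign}(\eta)=\operatorname{sign}(\tfrac12-y)$ (and $\eta=0$ if $y=\tfrac12$). Then $$I_{1-y}(N,N)=\sqrt{\frac{N}{2\pi}}\;\Phi(N)\int_{-\infty}^{\eta}e^{-\frac12 N\zeta^2}\,\phi(\zeta)\,d\zeta,$$ where $$\Phi(N)=\frac{1}{\sqrt N}\,\frac{\Gamma(N+\tfrac12)}{\Gamma(N)},\qquad \phi(\zeta)=\sqrt{\frac{\tfrac12\zeta^2}{1-\exp(-\tfrac12\zeta^2)}}\ \ (\phi(0)=1),$$ the square root being positive.
   Context: $I_x(a,b)=\frac{1}{B(a,b)}\int_0^x t^{a-1}(1-t)^{b-1}dt$ is the regularized incomplete beta function, $B(a,b)=\Gamma(a)\Gamma(b)/\Gamma(a+b)$. *)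

From Stdlib Require Import Reals.
From Coquelicot Require Import Coquelicot.
Open Scope R_scope.

Definition Gamma (s : R) : R :=
  RInt_gen (fun t => Rpower t (s - 1) * exp (- t)) (at_right 0) (Rbar_locally p_infty).

Definition Beta (a b : R) : R := Gamma a * Gamma b / Gamma (a + b).

Definition incBeta (x a b : R) : R :=
  / Beta a b *
  RInt_gen (fun t => Rpower t (a - 1) * Rpower (1 - t) (b - 1)) (at_right 0) (at_point x).

Definition PhiN (N : R) : R := / sqrt N * (Gamma (N + /2) / Gamma N).

Definition phi (z : R) : R :=
  if Req_EM_T z 0 then 1
  else sqrt ((/2 * z ^ 2) / (1 - exp (- (/2 * z ^ 2)))).

(* The map [tpoint] inverts the relation between [eta] and [1 - y] in the statement; with
   [t = tpoint zeta] it satisfies [t (1 - t) = exp (- zeta^2 / 2) / 4] and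
   [dt / dzeta = sqrt 2 * phi zeta * exp (- zeta^2 / 2) / 4], and it sends [-oo] to 0.
   It therefore carries [(t (1 - t))^(N-1) dt] to [sqrt 2 / 4^N * exp (- N zeta^2 / 2) phi zeta dzeta],
   so the eta integral equals [4^N / sqrt 2] times the incomplete beta integral up to 1 - y.
   What remains are the constants: [Gamma N = (N-1)!] by integrating by parts, and
   [Gamma (N + 1/2) = (2N)! sqrt pi / (4^N N!)] from the Gaussian integral, computed by the
   classical trick of differentiating [(int_0^x e^(-u^2))^2 + int_0^1 e^(-x^2 (1+t^2)) / (1+t^2) dt]. *)

From Stdlib Require Import Reals Lra Lia Factorial.
From Coquelicot Require Import Coquelicot.
Open Scope R_scope.

(** * Integrals from antiderivatives *)

(* Library lemmas specialised to real functions, where [apply] cannot infer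
   the normed-module structure by itself. *)
Lemma ex_derive_continuous_R (f : R -> R) x : ex_derive f x -> continuous f x.
Proof. exact (ex_derive_continuous (K := R_AbsRing) (V := R_NormedModule) f x). Qed.

Lemma ex_RInt_continuous_R (f : R -> R) a b :
  (forall x, Rmin a b <= x <= Rmax a b -> continuous f x) -> ex_RInt f a b.
Proof. exact (ex_RInt_continuous (V := R_CompleteNormedModule) f a b). Qed.

(* Equations produced by Coquelicot often live in a structure whose carrier is
   only convertible to [R], which [ring] and [field] do not see through. *)
Ltac R_eq := match goal with |- ?a = ?b => change (@eq R a b) end.

Lemma is_RInt_gen_antiderivative {Fa Fb : (R -> Prop) -> Prop}
  {FFa : Filter Fa} {FFb : Filter Fb} (f G : R -> R) (la lb : R) :
  filter_prod Fa Fb (fun ab => is_RInt f (fst ab) (snd ab) (G (snd ab) - G (fst ab))) ->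
  filterlim G Fa (locally la) -> filterlim G Fb (locally lb) ->
  is_RInt_gen f Fa Fb (lb - la).
Proof.
  intros HI Ha Hb P HP.
  assert (Hlim : filterlim (fun ab : R * R => G (snd ab) - G (fst ab))
                   (filter_prod Fa Fb) (locally (lb - la))).
  { apply (filterlim_comp_2 (G := locally lb) (H := locally (opp la))
      (fun ab : R * R => G (snd ab)) (fun ab => opp (G (fst ab))) plus).
    - exact (filterlim_comp _ _ _ _ _ _ _ _ filterlim_snd Hb).
    - apply (filterlim_comp _ _ _ (fun ab : R * R => G (fst ab)) opp _ (locally la)).
      + exact (filterlim_comp _ _ _ _ _ _ _ _ filterlim_fst Ha).
      + apply (filterlim_opp (V := R_NormedModule)).
    - apply (filterlim_plus lb (opp la)). }
  assert (HPlim : filter_prod Fa Fb (fun ab : R * R => P (G (snd ab) - G (fst ab))))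
    by exact (Hlim P HP).
  unfold filtermapi. generalize (filter_and _ _ HI HPlim).
  apply filter_imp. intros [a b] [Hab HPab].
  now exists (G b - G a).
Qed.

(* [g] is extended continuously outside [[a, b]] by clamping; its primitive minus
   [G] then has zero derivative inside, hence is constant by the mean value theorem. *)
Lemma is_RInt_derive_interior (G g : R -> R) (a b : R) : a <= b ->
  (forall x, a <= x <= b -> continuous G x) ->
  (forall x, a < x < b -> is_derive G x (g x)) ->
  (forall x, a <= x <= b -> continuous g x) ->
  is_RInt g a b (G b - G a).
Proof.
  intros Hab HG Hd Hg.
  set (clamp x := (Rabs (x - a) - Rabs (x - b) + a + b) / 2).
  assert (clamp_in : forall x, a <= clamp x <= b).
  { intros x; unfold clamp, Rabs; repeat destruct Rcase_abs; lra. }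
  assert (clamp_id : forall x, a <= x <= b -> clamp x = x).
  { intros x Hx; unfold clamp, Rabs; repeat destruct Rcase_abs; lra. }
  set (gc x := g (clamp x)).
  assert (gc_cont : forall x, continuous gc x).
  { intros x. apply (continuous_comp clamp g); [|apply Hg, clamp_in].
    apply continuity_pt_filterlim. unfold clamp. reg. }
  set (F x := RInt gc a x).
  assert (HF : forall x, is_RInt gc a x (F x)).
  { intros x. apply (RInt_correct gc a x), ex_RInt_continuous_R. intros; apply gc_cont. }
  assert (HFd : forall x, is_derive F x (gc x)).
  { intros x. apply (is_derive_RInt gc F a); [apply filter_forall, HF | apply gc_cont]. }
  destruct (MVT_gen (fun x => F x - G x) a b (fun _ => 0)) as [c [_ Heq]];
    rewrite ?Rmin_left, ?Rmax_right by lra.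
  - intros x Hx. replace 0 with (gc x - g x) by (unfold gc; rewrite clamp_id; lra).
    apply (is_derive_minus F G); [apply HFd | apply Hd; lra].
  - intros x Hx. apply continuity_pt_filterlim, (continuous_minus F G); [|apply HG; lra].
    apply ex_derive_continuous_R. eexists. apply HFd.
  - assert (F a = 0) by apply (RInt_point a gc).
    apply (is_RInt_ext gc).
    { intros x Hx. unfold gc. rewrite clamp_id; [reflexivity|].
      rewrite Rmin_left, Rmax_right in Hx; lra. }
    replace (G b - G a) with (F b) by lra. apply HF.
Qed.

Lemma is_RInt_derive_punctured (G g : R -> R) (c : R) :
  (forall x, continuous G x) ->
  (forall x, x <> c -> is_derive G x (g x)) ->
  (forall x, continuous g x) ->
  forall a b, is_RInt g a b (G b - G a).
Proof.
  intros HG Hd Hg.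
  assert (Hle : forall a b, a <= b -> is_RInt g a b (G b - G a)).
  { intros a b Hab.
    assert (Hside : forall u v, u <= v -> (v <= c \/ c <= u) -> is_RInt g u v (G v - G u)).
    { intros u v Huv Hc. apply is_RInt_derive_interior; auto.
      intros x Hx. apply Hd. lra. }
    destruct (Rle_dec b c); [apply Hside; lra|].
    destruct (Rle_dec c a); [apply Hside; lra|].
    replace (G b - G a) with (plus (G c - G a) (G b - G c)) by (cbn; ring).
    apply (is_RInt_Chasles g a c b); apply Hside; lra. }
  intros a b. destruct (Rle_dec a b) as [Hab|Hab]; [now apply Hle|].
  replace (G b - G a) with (opp (G a - G b)) by (cbn; ring).
  apply (is_RInt_swap g a b), Hle. lra.
Qed.

Section Primitive.

Variable f : R -> R.
Hypothesis f_cont : forall x, continuous f x.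

Lemma is_derive_primitive x : is_derive (fun x => RInt f 0 x) x (f x).
Proof.
  apply (is_derive_RInt f (fun x => RInt f 0 x) 0); [|apply f_cont].
  apply filter_forall. intros y.
  apply (RInt_correct f 0 y), ex_RInt_continuous_R. intros; apply f_cont.
Qed.

Lemma continuous_primitive x : continuous (fun x => RInt f 0 x) x.
Proof. apply ex_derive_continuous_R. eexists. apply is_derive_primitive. Qed.

Lemma is_RInt_primitive a b : is_RInt f a b (RInt f 0 b - RInt f 0 a).
Proof.
  apply (is_RInt_derive (V := R_CompleteNormedModule) (fun x => RInt f 0 x)).
  - intros; apply is_derive_primitive.
  - intros; apply f_cont.
Qed.

Lemma RInt_derive_eq (G : R -> R) :
  (forall x, is_derive G x (f x)) -> forall a b, RInt f a b = G b - G a.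
Proof.
  intros HG a b. apply is_RInt_unique.
  apply (is_RInt_derive (V := R_CompleteNormedModule) G).
  - intros; apply HG.
  - intros; apply f_cont.
Qed.

End Primitive.

Lemma primitive_0 (f : R -> R) : RInt f 0 0 = 0.
Proof. apply (RInt_point 0 f). Qed.

Lemma is_RInt_gen_right0_p_infty (f H : R -> R) (l : R) :
  (forall a b, 0 < a -> 0 < b -> is_RInt f a b (H b - H a)) ->
  continuous H 0 -> is_lim H p_infty l ->
  is_RInt_gen f (at_right 0) (Rbar_locally p_infty) (l - H 0).
Proof.
  intros HI H0 Hl. apply (is_RInt_gen_antiderivative f H); [| |exact Hl].
  apply Filter_prod with (fun a => 0 < a) (fun b => 0 < b).
  - exact (filter_forall _ (fun a Ha => Ha)).
  - now exists 0.
  - intros a b Ha Hb. now apply HI.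
  - eapply filterlim_filter_le_1; [apply filter_le_within|exact H0].
Qed.

(** * Gaussian and exponential moments *)

Lemma exp_mul_INR x n : exp (INR n * x) = exp x ^ n.
Proof.
  induction n as [|n IHn]; simpl pow.
  - now rewrite Rmult_0_l, exp_0.
  - now rewrite S_INR, Rmult_plus_distr_r, Rmult_1_l, exp_plus, IHn, Rmult_comm.
Qed.

Lemma is_lim_p_infty_0_of_bound (h : R -> R) (C : R) :
  (forall x, 1 <= x -> Rabs (h x) <= C / x) -> is_lim h p_infty 0.
Proof.
  intros Hb. apply filterlim_locally. intros [eps Heps].
  exists (Rmax 1 (Rabs C / eps)). intros x Hx.
  assert (H1 : 1 < x) by (eapply Rle_lt_trans; [apply Rmax_l|exact Hx]).
  assert (H2 : Rabs C / eps < x) by (eapply Rle_lt_trans; [apply Rmax_r|exact Hx]).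
  change (Rabs (h x - 0) < eps). rewrite Rminus_0_r.
  apply (Rle_lt_trans _ (C / x)); [now apply Hb; lra|].
  apply Rmult_lt_reg_r with x; [lra|]. unfold Rdiv. rewrite Rmult_assoc, Rinv_l, Rmult_1_r by lra.
  apply Rmult_lt_compat_r with (r := eps) in H2; [|lra].
  unfold Rdiv in H2. rewrite Rmult_assoc, Rinv_l, Rmult_1_r in H2 by lra.
  pose proof (Rle_abs C). lra.
Qed.

Lemma pow_mul_exp_opp_le (y : R) (k : nat) : 0 <= y -> y ^ k * exp (- y) <= INR (fact k).
Proof.
  intros Hy.
  assert (Hterm : y ^ k / INR (fact k) <= exp y).
  { apply (Rle_trans _ (sum_f_R0 (fun j => y ^ j / INR (fact j)) k)); [|now apply exp_ge_taylor].
    destruct k as [|k]; cbn [sum_f_R0]; [apply Rle_refl|].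
    assert (0 <= sum_f_R0 (fun j => y ^ j / INR (fact j)) k); [|lra].
    apply cond_pos_sum. intros j. apply Rmult_le_pos; [now apply pow_le|].
    apply Rlt_le, Rinv_0_lt_compat, INR_fact_lt_0. }
  pose proof (INR_fact_lt_0 k). pose proof (exp_pos y).
  rewrite exp_Ropp. unfold Rdiv in Hterm.
  apply Rmult_le_reg_r with (exp y); [lra|].
  rewrite Rmult_assoc, Rinv_l, Rmult_1_r by lra.
  apply Rmult_le_reg_r with (/ INR (fact k)); [now apply Rinv_0_lt_compat|].
  rewrite (Rmult_comm (INR _)), Rmult_assoc, Rinv_r, Rmult_1_r by lra. lra.
Qed.

Lemma is_lim_pow_mul_exp_opp (k : nat) : is_lim (fun x => x ^ k * exp (- x)) p_infty 0.
Proof.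
  apply is_lim_p_infty_0_of_bound with (INR (fact (S k))). intros x Hx.
  rewrite Rabs_right by (apply Rle_ge, Rmult_le_pos; [apply pow_le; lra|apply Rlt_le, exp_pos]).
  replace (x ^ k * exp (- x)) with (x ^ S k * exp (- x) / x) by (simpl; field; lra).
  apply Rmult_le_compat_r; [apply Rlt_le, Rinv_0_lt_compat; lra|].
  apply pow_mul_exp_opp_le. lra.
Qed.

Lemma is_lim_pow_mul_gaussian (k : nat) :
  is_lim (fun x => x ^ (2 * k + 1) * exp (- (x ^ 2))) p_infty 0.
Proof.
  apply is_lim_p_infty_0_of_bound with (INR (fact (S k))). intros x Hx.
  rewrite Rabs_right by (apply Rle_ge, Rmult_le_pos; [apply pow_le; lra|apply Rlt_le, exp_pos]).
  replace (x ^ (2 * k + 1) * exp (- (x ^ 2))) with ((x ^ 2) ^ S k * exp (- (x ^ 2)) / x)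
    by (rewrite <- pow_mult; replace (2 * S k)%nat with (S (2 * k + 1)) by lia; simpl; field; lra).
  apply Rmult_le_compat_r; [apply Rlt_le, Rinv_0_lt_compat; lra|].
  apply pow_mul_exp_opp_le. apply pow2_ge_0.
Qed.

Definition gauss_moment (k : nat) (x : R) : R :=
  RInt (fun u => u ^ (2 * k) * exp (- (u ^ 2))) 0 x.

Lemma continuous_gauss_moment_integrand k u :
  continuous (fun u => u ^ (2 * k) * exp (- (u ^ 2))) u.
Proof. apply ex_derive_continuous_R. auto_derive. auto. Qed.

Lemma gauss_moment_0 x : gauss_moment 0 x = RInt (fun u => exp (- (u ^ 2))) 0 x.
Proof. apply RInt_ext. intros u _. apply Rmult_1_l. Qed.

Lemma is_derive_gauss_moment k x :
  is_derive (gauss_moment k) x (x ^ (2 * k) * exp (- (x ^ 2))).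
Proof. exact (is_derive_primitive _ (continuous_gauss_moment_integrand k) x). Qed.

Definition gauss_aux (x : R) : R :=
  RInt (fun t => exp (- (x ^ 2) * (1 + t ^ 2)) / (1 + t ^ 2)) 0 1.

Lemma is_derive_gauss_aux_integrand (x t : R) :
  is_derive (fun x => exp (- (x ^ 2) * (1 + t ^ 2)) / (1 + t ^ 2)) x
    (-2 * x * exp (- (x ^ 2) * (1 + t ^ 2))).
Proof.
  assert (0 < 1 + t ^ 2) by nra.
  auto_derive; [lra|].
  replace (x * (x * 1)) with (x ^ 2) by ring. replace (t * (t * 1)) with (t ^ 2) by ring.
  field. lra.
Qed.

Lemma continuity_2d_pt_gauss_aux_derivative x t :
  continuity_2d_pt (fun x t => -2 * x * exp (- (x ^ 2) * (1 + t ^ 2))) x t.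
Proof.
  apply continuity_2d_pt_mult.
  - apply continuity_2d_pt_mult; [apply continuity_2d_pt_const | apply continuity_2d_pt_id1].
  - assert (Harg : continuity_2d_pt (fun x t => - (x ^ 2) * (1 + t ^ 2)) x t).
    { repeat first [ apply continuity_2d_pt_mult | apply continuity_2d_pt_plus
                   | apply continuity_2d_pt_opp | apply continuity_2d_pt_id1
                   | apply continuity_2d_pt_id2 | apply continuity_2d_pt_const ]. }
    apply continuity_2d_pt_filterlim in Harg. apply continuity_2d_pt_filterlim.
    exact (filterlim_comp _ _ _ _ exp _ _ _ Harg (continuous_exp _)).
Qed.

Lemma is_derive_gauss_aux x : is_derive gauss_aux x (-2 * exp (- (x ^ 2)) * gauss_moment 0 x).
Proof.
  set (h x t := exp (- (x ^ 2) * (1 + t ^ 2)) / (1 + t ^ 2)).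
  assert (Hh : forall x t, Derive (fun x => h x t) x = -2 * x * exp (- (x ^ 2) * (1 + t ^ 2))).
  { intros; apply is_derive_unique, is_derive_gauss_aux_integrand. }
  assert (Hsubst : RInt (fun t => Derive (fun x => h x t) x) 0 1
                   = -2 * exp (- (x ^ 2)) * gauss_moment 0 x).
  { rewrite (RInt_ext _ (fun t => -2 * exp (- (x ^ 2)) * (x * exp (- ((x * t + 0) ^ 2))))).
    2:{ intros t _. R_eq. rewrite Hh.
        replace (- (x ^ 2) * (1 + t ^ 2)) with (- (x ^ 2) + - ((x * t + 0) ^ 2)) by ring.
        rewrite exp_plus. ring. }
    rewrite (RInt_scal (V := R_CompleteNormedModule)).
    2:{ apply ex_RInt_continuous_R. intros; apply ex_derive_continuous_R. auto_derive. auto. }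
    rewrite (RInt_comp_lin (V := R_CompleteNormedModule) (fun u => exp (- (u ^ 2)))).
    2:{ apply ex_RInt_continuous_R. intros; apply ex_derive_continuous_R. auto_derive. auto. }
    rewrite Rmult_0_r, Rmult_1_r, !Rplus_0_r, gauss_moment_0. reflexivity. }
  rewrite <- Hsubst. apply (is_derive_RInt_param h 0 1 x).
  - apply filter_forall. intros y t _. eexists. apply is_derive_gauss_aux_integrand.
  - intros t _. apply (continuity_2d_pt_ext (fun x t => -2 * x * exp (- (x ^ 2) * (1 + t ^ 2)))).
    + intros; now rewrite Hh.
    + apply continuity_2d_pt_gauss_aux_derivative.
  - apply filter_forall. intros y. apply ex_RInt_continuous_R. intros t _.
    apply ex_derive_continuous_R. unfold h. assert (0 < 1 + t ^ 2) by nra. auto_derive. lra.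
Qed.

Lemma gauss_aux_0 : gauss_aux 0 = PI / 4.
Proof.
  unfold gauss_aux. rewrite (RInt_ext _ (fun t => / (1 + t²))).
  2:{ intros t _. R_eq. replace (- (0 ^ 2) * (1 + t ^ 2)) with 0 by ring.
      rewrite exp_0. unfold Rsqr. field. nra. }
  rewrite (is_RInt_unique _ _ _ (atan 1 - atan 0)), atan_1, atan_0; [R_eq; ring|].
  apply (is_RInt_derive (V := R_CompleteNormedModule) atan).
  - intros; apply is_derive_atan.
  - intros x _. apply ex_derive_continuous_R. auto_derive. unfold Rsqr; nra.
Qed.

Lemma gauss_moment_0_sqr_add_aux x : gauss_moment 0 x ^ 2 + gauss_aux x = PI / 4.
Proof.
  set (K x := gauss_moment 0 x ^ 2 + gauss_aux x).
  assert (HK : forall x, is_derive K x 0).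
  { intros y. replace 0 with (INR 2 * (y ^ (2 * 0) * exp (- (y ^ 2))) * gauss_moment 0 y ^ pred 2
                               + -2 * exp (- (y ^ 2)) * gauss_moment 0 y) by (simpl; ring).
    apply (is_derive_plus (fun x => gauss_moment 0 x ^ 2) gauss_aux).
    - apply is_derive_pow, is_derive_gauss_moment.
    - apply is_derive_gauss_aux. }
  destruct (MVT_gen K 0 x (fun _ => 0)) as [c [_ Hc]].
  - intros; apply HK.
  - intros. apply continuity_pt_filterlim, ex_derive_continuous_R. eexists; apply HK.
  - change (K x = PI / 4). rewrite <- gauss_aux_0.
    replace (gauss_aux 0) with (K 0) by (unfold K, gauss_moment; rewrite primitive_0; ring).
    lra.
Qed.

Lemma gauss_aux_bound x : 0 <= gauss_aux x <= exp (- (x ^ 2)).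
Proof.
  unfold gauss_aux.
  assert (Hint : ex_RInt (fun t => exp (- (x ^ 2) * (1 + t ^ 2)) / (1 + t ^ 2)) 0 1).
  { apply ex_RInt_continuous_R. intros t _. apply ex_derive_continuous_R.
    assert (0 < 1 + t ^ 2) by nra. auto_derive. lra. }
  split.
  - apply RInt_ge_0; [lra|exact Hint|]. intros t _.
    apply Rdiv_le_0_compat; [apply Rlt_le, exp_pos | nra].
  - apply (Rle_trans _ (RInt (fun _ => exp (- (x ^ 2))) 0 1)).
    + apply RInt_le; [lra|exact Hint|apply ex_RInt_const|]. intros t Ht.
      assert (Hexp : exp (- (x ^ 2) * (1 + t ^ 2)) <= exp (- (x ^ 2))).
      { destruct (Req_dec (x ^ 2 * t ^ 2) 0) as [E|E].
        - apply Req_le. f_equal. nra.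
        - apply Rlt_le, exp_increasing. pose proof (pow2_ge_0 x). pose proof (pow2_ge_0 t). nra. }
      apply (Rle_trans _ (exp (- (x ^ 2) * (1 + t ^ 2)))); [|exact Hexp].
      apply Rmult_le_reg_r with (1 + t ^ 2); [nra|].
      unfold Rdiv. rewrite Rmult_assoc, Rinv_l by nra.
      pose proof (exp_pos (- (x ^ 2) * (1 + t ^ 2))). nra.
    + rewrite RInt_const. cbn. unfold mult; cbn. lra.
Qed.

Lemma is_lim_gauss_moment_0 : is_lim (gauss_moment 0) p_infty (sqrt PI / 2).
Proof.
  apply (is_lim_ext_loc (fun x => sqrt (PI / 4 - gauss_aux x))).
  { exists 0. intros x Hx. rewrite <- (gauss_moment_0_sqr_add_aux x).
    replace (_ ^ 2 + gauss_aux x - gauss_aux x) with (gauss_moment 0 x ^ 2) by ring.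
    apply sqrt_pow2. unfold gauss_moment. apply RInt_ge_0; [lra| |].
    - apply ex_RInt_continuous_R. intros; apply continuous_gauss_moment_integrand.
    - intros; apply Rmult_le_pos; [apply pow_le|apply Rlt_le, exp_pos]; lra. }
  replace (sqrt PI / 2) with (sqrt (PI / 4 - 0)).
  2:{ rewrite Rminus_0_r, sqrt_div_alt by lra. replace 4 with (2 ^ 2) by ring.
      now rewrite sqrt_pow2 by lra. }
  apply is_lim_comp_continuous; [|apply continuous_sqrt].
  apply (is_lim_minus' (fun _ => PI / 4)); [apply is_lim_const|].
  apply is_lim_p_infty_0_of_bound with 1. intros x Hx.
  destruct (gauss_aux_bound x) as [H0 H1]. rewrite Rabs_right by lra.
  apply (Rle_trans _ _ _ H1). rewrite exp_Ropp, Rdiv_1_l. apply Rinv_le_contravar; [lra|].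
  pose proof (exp_ineq1_le (x ^ 2)). nra.
Qed.

Lemma gauss_moment_succ k x :
  gauss_moment (S k) x
  = (2 * INR k + 1) / 2 * gauss_moment k x - x ^ (2 * k + 1) * exp (- (x ^ 2)) / 2.
Proof.
  unfold gauss_moment at 1.
  rewrite (RInt_derive_eq _ (continuous_gauss_moment_integrand (S k))
             (fun x => (2 * INR k + 1) / 2 * gauss_moment k x
                       - x ^ (2 * k + 1) * exp (- (x ^ 2)) / 2)).
  - unfold gauss_moment. rewrite primitive_0, pow_i by lia. R_eq. field.
  - intros u.
    replace (u ^ (2 * S k) * exp (- (u ^ 2))) with
      ((2 * INR k + 1) / 2 * (u ^ (2 * k) * exp (- (u ^ 2)))
       - (INR (2 * k + 1) * u ^ (2 * k) - 2 * u ^ (2 * k + 2)) * exp (- (u ^ 2)) / 2).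
    2:{ rewrite plus_INR, mult_INR. replace (2 * S k)%nat with (2 * k + 2)%nat by lia.
        simpl INR. field. }
    apply (is_derive_minus (fun x => (2 * INR k + 1) / 2 * gauss_moment k x)
             (fun x => x ^ (2 * k + 1) * exp (- (x ^ 2)) / 2)).
    + apply is_derive_scal, is_derive_gauss_moment.
    + auto_derive; [auto|].
      replace (k + (k + 0))%nat with (2 * k)%nat by lia.
      replace (pred (2 * k + 1)) with (2 * k)%nat by lia.
      rewrite !pow_add. R_eq. simpl. field.
Qed.

(* The limit is [Gamma (k + 1/2) / 2]. *)
Lemma is_lim_gauss_moment k :
  is_lim (gauss_moment k) p_infty (INR (fact (2 * k)) * sqrt PI / (2 * 4 ^ k * INR (fact k))).
Proof.
  induction k as [|k IHk].
  - replace (INR (fact (2 * 0)) * sqrt PI / (2 * 4 ^ 0 * INR (fact 0))) with (sqrt PI / 2)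
      by (simpl; field). apply is_lim_gauss_moment_0.
  - apply (is_lim_ext (fun x => (2 * INR k + 1) / 2 * gauss_moment k x
                                  - x ^ (2 * k + 1) * exp (- (x ^ 2)) / 2)).
    { intros x. symmetry. apply gauss_moment_succ. }
    set (L := INR (fact (2 * k)) * sqrt PI / (2 * 4 ^ k * INR (fact k))) in *.
    replace (INR (fact (2 * S k)) * sqrt PI / (2 * 4 ^ S k * INR (fact (S k))))
      with ((2 * INR k + 1) / 2 * L - 0 / 2).
    2:{ unfold L. replace (2 * S k)%nat with (S (S (2 * k))) by lia.
        rewrite !fact_simpl, !mult_INR, !S_INR, mult_INR. simpl INR.
        pose proof (INR_fact_lt_0 k). pose proof (pos_INR k). pose proof (pow_lt 4 k).
        simpl pow. field. repeat split; lra. }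
    apply is_lim_minus'.
    + apply (is_lim_scal_l _ _ _ L), IHk.
    + apply (is_lim_scal_r _ (/ 2) _ 0), is_lim_pow_mul_gaussian.
Qed.

Definition exp_moment (k : nat) (x : R) : R := RInt (fun t => t ^ k * exp (- t)) 0 x.

Lemma continuous_exp_moment_integrand k t : continuous (fun t => t ^ k * exp (- t)) t.
Proof. apply ex_derive_continuous_R. auto_derive. auto. Qed.

Lemma is_derive_exp_moment k x : is_derive (exp_moment k) x (x ^ k * exp (- x)).
Proof. exact (is_derive_primitive _ (continuous_exp_moment_integrand k) x). Qed.

Lemma exp_moment_0 x : exp_moment 0 x = 1 - exp (- x).
Proof.
  unfold exp_moment. rewrite (RInt_derive_eq _ (continuous_exp_moment_integrand 0)
                                (fun t => - exp (- t))).
  - rewrite Ropp_0, exp_0. R_eq. ring.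
  - intros t. auto_derive; [auto|]. ring.
Qed.

Lemma exp_moment_succ k x :
  exp_moment (S k) x = INR (S k) * exp_moment k x - x ^ S k * exp (- x).
Proof.
  unfold exp_moment at 1.
  rewrite (RInt_derive_eq _ (continuous_exp_moment_integrand (S k))
             (fun x => INR (S k) * exp_moment k x - x ^ S k * exp (- x))).
  - unfold exp_moment. rewrite primitive_0, pow_i by lia. R_eq. ring.
  - intros u.
    replace (u ^ S k * exp (- u)) with
      (INR (S k) * (u ^ k * exp (- u)) - (INR (S k) * u ^ k - u ^ S k) * exp (- u)) by ring.
    apply (is_derive_minus (fun x => INR (S k) * exp_moment k x) (fun x => x ^ S k * exp (- x))).
    + apply is_derive_scal, is_derive_exp_moment.
    + auto_derive; [auto|].
      change (match k with 0%nat => 1 | S _ => INR k + 1 end) with (INR (S k)).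
      R_eq. simpl. ring.
Qed.

Lemma is_lim_exp_moment k : is_lim (exp_moment k) p_infty (INR (fact k)).
Proof.
  induction k as [|k IHk].
  - apply (is_lim_ext (fun x => 1 - x ^ 0 * exp (- x))).
    { intros x. rewrite exp_moment_0. simpl. ring. }
    replace (INR (fact 0)) with (1 - 0) by (simpl; ring).
    apply is_lim_minus'; [apply is_lim_const | apply is_lim_pow_mul_exp_opp].
  - apply (is_lim_ext (fun x => INR (S k) * exp_moment k x - x ^ S k * exp (- x))).
    { intros x. symmetry. apply exp_moment_succ. }
    replace (INR (fact (S k))) with (INR (S k) * INR (fact k) - 0)
      by (rewrite fact_simpl, mult_INR; ring).
    apply is_lim_minus'.
    + apply (is_lim_scal_l _ _ _ (INR (fact k))), IHk.
    + apply is_lim_pow_mul_exp_opp.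
Qed.

(** * Gamma at integers and half-integers *)

Lemma Gamma_nat m : Gamma (INR (S m)) = INR (fact m).
Proof.
  unfold Gamma. apply is_RInt_gen_unique.
  replace (INR (fact m)) with (INR (fact m) - exp_moment m 0)
    by (unfold exp_moment; rewrite primitive_0; ring).
  apply is_RInt_gen_right0_p_infty; [|apply ex_derive_continuous_R; eexists;
                                      apply is_derive_exp_moment | apply is_lim_exp_moment].
  intros a b Ha Hb. apply (is_RInt_ext (fun t => t ^ m * exp (- t))).
  - intros t Ht. assert (Ht0 : 0 < t) by (pose proof (Rmin_glb_lt a b 0 Ha Hb); lra).
    rewrite S_INR, Rplus_minus_r, Rpower_pow by exact Ht0. reflexivity.
  - apply is_RInt_primitive, continuous_exp_moment_integrand.
Qed.

Lemma is_derive_gauss_moment_sqrt k t : 0 < t ->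
  is_derive (fun t => 2 * gauss_moment k (sqrt t)) t (t ^ k / sqrt t * exp (- t)).
Proof.
  intros Ht. pose proof (sqrt_lt_R0 t Ht). evar (d : R).
  assert (Hd : is_derive (fun t => 2 * gauss_moment k (sqrt t)) t d).
  { apply is_derive_scal, (is_derive_comp (gauss_moment k) sqrt).
    - apply is_derive_gauss_moment.
    - apply (is_derive_sqrt (fun t => t) t 1); [auto_derive; auto | exact Ht]. }
  replace (t ^ k / sqrt t * exp (- t)) with d; [exact Hd|]. unfold d, scal; cbn; unfold mult; cbn.
  replace (k + (k + 0))%nat with (2 * k)%nat by lia.
  rewrite Rmult_1_r, sqrt_sqrt, pow_mult, pow2_sqrt by lra. R_eq. field. lra.
Qed.

(* The substitution [t = u ^ 2] reduces [Gamma (k + 1/2)] to [2 * gauss_moment k (+oo)]. *)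
Lemma Gamma_nat_add_half k :
  Gamma (INR k + / 2) = INR (fact (2 * k)) * sqrt PI / (4 ^ k * INR (fact k)).
Proof.
  unfold Gamma. apply is_RInt_gen_unique.
  set (H t := 2 * gauss_moment k (sqrt t)).
  replace (INR (fact (2 * k)) * sqrt PI / (4 ^ k * INR (fact k)))
    with (2 * (INR (fact (2 * k)) * sqrt PI / (2 * 4 ^ k * INR (fact k))) - H 0).
  2:{ unfold H, gauss_moment. rewrite sqrt_0, primitive_0.
      pose proof (INR_fact_lt_0 k). pose proof (pow_lt 4 k). field. lra. }
  apply is_RInt_gen_right0_p_infty.
  - intros a b Ha Hb. apply (is_RInt_ext (fun t => t ^ k / sqrt t * exp (- t))).
    + intros t Ht. assert (Ht0 : 0 < t) by (pose proof (Rmin_glb_lt a b 0 Ha Hb); lra).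
      replace (INR k + / 2 - 1) with (INR k + - / 2) by field.
      rewrite Rpower_plus, Rpower_pow, Rpower_Ropp, Rpower_sqrt by exact Ht0. reflexivity.
    + apply (is_RInt_derive (V := R_CompleteNormedModule) H).
      * intros t Ht. apply is_derive_gauss_moment_sqrt. pose proof (Rmin_glb_lt a b 0 Ha Hb). lra.
      * intros t Ht. assert (Ht0 : 0 < t) by (pose proof (Rmin_glb_lt a b 0 Ha Hb); lra).
        pose proof (sqrt_lt_R0 t Ht0).
        apply ex_derive_continuous_R. auto_derive. repeat split; lra.
  - apply (continuous_comp sqrt (fun x => 2 * gauss_moment k x)); [apply continuous_sqrt|].
    apply ex_derive_continuous_R. eexists. apply is_derive_scal, is_derive_gauss_moment.
  - apply (is_lim_scal_l (fun t => gauss_moment k (sqrt t)) 2 p_infty (_ : R)).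
    eapply filterlim_comp; [apply filterlim_sqrt_p | apply is_lim_gauss_moment].
Qed.

(** * The change of variables *)

Definition expm1_quot (v : R) : R := if Req_EM_T v 0 then 1 else (1 - exp (- v)) / v.

Lemma expm1_quot_pos v : 0 < expm1_quot v.
Proof.
  unfold expm1_quot. destruct (Req_EM_T v 0) as [|Hv]; [lra|].
  destruct (Rlt_or_le 0 v) as [Hp|Hn].
  - assert (exp (- v) < 1) by (rewrite <- exp_0; apply exp_increasing; lra).
    apply Rdiv_lt_0_compat; lra.
  - assert (1 < exp (- v)) by (rewrite <- exp_0; apply exp_increasing; lra).
    replace ((1 - exp (- v)) / v) with ((exp (- v) - 1) / - v) by (field; lra).
    apply Rdiv_lt_0_compat; lra.
Qed.

Lemma continuous_expm1_quot v : continuous expm1_quot v.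
Proof.
  destruct (Req_dec v 0) as [->|Hv].
  - apply filterlim_locally. intros eps.
    destruct (is_lim_div_expm1_0 (ball 1 eps) (locally_ball 1 eps)) as [d Hd].
    exists d. intros v Hv. unfold expm1_quot.
    destruct (Req_EM_T 0 0) as [_|]; [|lra].
    destruct (Req_EM_T v 0) as [_|Hv0]; [apply ball_center|].
    replace ((1 - exp (- v)) / v) with ((exp (- v) - 1) / - v) by (field; auto).
    apply Hd; [|lra].
    change (Rabs (- v - 0) < d). change (Rabs (v - 0) < d) in Hv.
    rewrite Rminus_0_r, Rabs_Ropp. rewrite Rminus_0_r in Hv. exact Hv.
  - apply continuous_ext_loc with (fun u => (1 - exp (- u)) / u).
    + assert (Hp : 0 < Rabs v) by now apply Rabs_pos_lt.
      exists (mkposreal _ Hp). intros u Hu. change (Rabs (u - v) < Rabs v) in Hu.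
      unfold expm1_quot. destruct (Req_EM_T u 0) as [->|]; [|reflexivity].
      rewrite Rminus_0_l, Rabs_Ropp in Hu. lra.
    + apply ex_derive_continuous_R. auto_derive. exact Hv.
Qed.

Lemma phi_expm1_quot z : phi z = sqrt (/ expm1_quot (/ 2 * z ^ 2)).
Proof.
  unfold phi, expm1_quot.
  destruct (Req_EM_T z 0) as [Hz|Hz]; destruct (Req_EM_T (/ 2 * z ^ 2) 0) as [Hv|Hv].
  - now rewrite Rinv_1, sqrt_1.
  - exfalso. apply Hv. rewrite Hz. ring.
  - exfalso. pose proof (pow2_gt_0 z Hz). lra.
  - f_equal. assert (exp (- (/ 2 * z ^ 2)) < 1).
    { rewrite <- exp_0. apply exp_increasing. pose proof (pow2_gt_0 z Hz). lra. }
    field. lra.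
Qed.

Lemma continuous_phi z : continuous phi z.
Proof.
  apply (continuous_ext (fun z => sqrt (/ expm1_quot (/ 2 * z ^ 2)))).
  { intros; symmetry; apply phi_expm1_quot. }
  apply continuous_sqrt_comp.
  apply (continuous_comp (fun z => expm1_quot (/ 2 * z ^ 2)) Rinv).
  - apply (continuous_comp (fun z => / 2 * z ^ 2) expm1_quot); [|apply continuous_expm1_quot].
    apply ex_derive_continuous_R. auto_derive. auto.
  - apply continuity_pt_filterlim, continuity_pt_inv; [apply continuity_pt_id|].
    pose proof (expm1_quot_pos (/ 2 * z ^ 2)). lra.
Qed.

Definition sroot (z : R) : R := sqrt (1 - exp (- (/ 2 * z ^ 2))).

Definition sign1 (z : R) : R := if Rlt_dec z 0 then -1 else 1.

(* [tpoint] inverts the change of variables of the theorem: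
   [tpoint z * (1 - tpoint z) = exp (- z^2 / 2) / 4], and [tpoint z > 1/2] iff [z > 0]. *)
Definition tpoint (z : R) : R := (1 + sign1 z * sroot z) / 2.

Lemma exp_neg_half_sqr_lt_1 z : z <> 0 -> exp (- (/ 2 * z ^ 2)) < 1.
Proof.
  intros Hz. rewrite <- exp_0. apply exp_increasing. pose proof (pow2_gt_0 z Hz). lra.
Qed.

Lemma sroot_sqr z : sroot z ^ 2 = 1 - exp (- (/ 2 * z ^ 2)).
Proof.
  unfold sroot. apply pow2_sqrt.
  destruct (Req_dec z 0) as [->|Hz].
  - replace (- (/ 2 * 0 ^ 2)) with 0 by ring. rewrite exp_0. lra.
  - pose proof (exp_neg_half_sqr_lt_1 z Hz). lra.
Qed.

Lemma sroot_pos z : z <> 0 -> 0 < sroot z.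
Proof. intros Hz. apply sqrt_lt_R0. pose proof (exp_neg_half_sqr_lt_1 z Hz). lra. Qed.

Lemma sroot_0 : sroot 0 = 0.
Proof.
  unfold sroot. replace (- (/ 2 * 0 ^ 2)) with 0 by ring. rewrite exp_0, Rminus_diag. apply sqrt_0.
Qed.

Lemma continuous_sroot z : continuous sroot z.
Proof. apply continuous_sqrt_comp, ex_derive_continuous_R. auto_derive. auto. Qed.

Lemma is_derive_sroot z : z <> 0 ->
  is_derive sroot z (z * exp (- (/ 2 * z ^ 2)) / (2 * sroot z)).
Proof.
  intros Hz. pose proof (exp_neg_half_sqr_lt_1 z Hz). pose proof (sroot_pos z Hz).
  unfold sroot, Rminus in *. auto_derive; replace (z * (z * 1)) with (z ^ 2) by ring; [lra|].
  R_eq. field. lra.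
Qed.

Lemma sqrt2_mul_phi z : z <> 0 -> sqrt 2 * phi z = Rabs z / sroot z.
Proof.
  intros Hz. pose proof (exp_neg_half_sqr_lt_1 z Hz).
  unfold phi, sroot. destruct (Req_EM_T z 0) as [|_]; [contradiction|].
  rewrite <- sqrt_mult_alt by lra.
  replace (2 * (/ 2 * z ^ 2 / (1 - exp (- (/ 2 * z ^ 2)))))
    with (z ^ 2 / (1 - exp (- (/ 2 * z ^ 2)))) by (field; lra).
  rewrite sqrt_div_alt, <- Rsqr_pow2, sqrt_Rsqr_abs by lra. reflexivity.
Qed.

Lemma sign1_sqr z : sign1 z ^ 2 = 1.
Proof. unfold sign1. destruct (Rlt_dec z 0); ring. Qed.

Lemma sign1_mul z : sign1 z * z = Rabs z.
Proof.
  unfold sign1. destruct (Rlt_dec z 0).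
  - rewrite Rabs_left by lra. ring.
  - rewrite Rabs_right by lra. ring.
Qed.

Lemma sign1_locally_const z : z <> 0 -> locally z (fun t => sign1 t = sign1 z).
Proof.
  intros Hz. unfold sign1. destruct (Rlt_dec z 0) as [Hn|Hp].
  - apply (filter_imp (fun t => t < 0)); [|exact (open_lt 0 z Hn)].
    intros t Ht. now destruct (Rlt_dec t 0).
  - apply (filter_imp (fun t => 0 < t)); [|apply (open_gt 0 z); lra].
    intros t Ht. destruct (Rlt_dec t 0); [lra|reflexivity].
Qed.

Lemma tpoint_mul_one_sub z : tpoint z * (1 - tpoint z) = exp (- (/ 2 * z ^ 2)) / 4.
Proof.
  pose proof (sroot_sqr z). pose proof (sign1_sqr z). unfold tpoint.
  replace ((1 + sign1 z * sroot z) / 2 * (1 - (1 + sign1 z * sroot z) / 2))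
    with ((1 - sign1 z ^ 2 * sroot z ^ 2) / 4) by field.
  rewrite H0, H. field.
Qed.

Lemma is_derive_tpoint z : z <> 0 ->
  is_derive tpoint z (sqrt 2 * phi z * exp (- (/ 2 * z ^ 2)) / 4).
Proof.
  intros Hz. rewrite sqrt2_mul_phi, <- sign1_mul by exact Hz. pose proof (sroot_pos z Hz).
  apply (is_derive_ext_loc (fun t => / 2 * (1 + sign1 z * sroot t))).
  { apply (filter_imp (fun t => sign1 t = sign1 z)); [|now apply sign1_locally_const].
    intros t Ht. unfold tpoint. rewrite Ht. R_eq. field. }
  evar (d : R).
  assert (Hd : is_derive (fun t => / 2 * (1 + sign1 z * sroot t)) z d).
  { apply is_derive_scal, (is_derive_plus (fun _ => 1) (fun t => sign1 z * sroot t)).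
    - apply is_derive_const.
    - apply is_derive_scal, is_derive_sroot, Hz. }
  replace (sign1 z * z / sroot z * exp (- (/ 2 * z ^ 2)) / 4) with d; [exact Hd|].
  unfold d, scal, zero, plus; cbn; unfold mult, plus; cbn. R_eq. field. lra.
Qed.

Lemma continuous_tpoint z : continuous tpoint z.
Proof.
  destruct (Req_dec z 0) as [->|Hz].
  - apply filterlim_locally. intros eps.
    generalize (proj1 (filterlim_locally sroot (sroot 0)) (continuous_sroot 0) eps).
    apply filter_imp. intros t Ht.
    change (Rabs (sroot t - sroot 0) < eps) in Ht. change (Rabs (tpoint t - tpoint 0) < eps).
    apply Rabs_def2 in Ht. apply Rabs_def1;
      unfold tpoint, sign1 in *; rewrite sroot_0 in *; destruct (Rlt_dec t 0); lra.
  - apply ex_derive_continuous_R. eexists. now apply is_derive_tpoint.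
Qed.

(** * The incomplete beta function and the eta integral *)

Definition beta_primitive (m : nat) (x : R) : R := RInt (fun t => (t * (1 - t)) ^ m) 0 x.

Lemma continuous_beta_integrand m t : continuous (fun t => (t * (1 - t)) ^ m) t.
Proof. apply ex_derive_continuous_R. auto_derive. auto. Qed.

Lemma is_derive_beta_primitive m x : is_derive (beta_primitive m) x ((x * (1 - x)) ^ m).
Proof. exact (is_derive_primitive _ (continuous_beta_integrand m) x). Qed.

Lemma RInt_gen_beta_integrand m x : 0 < x < 1 ->
  RInt_gen (fun t => Rpower t (INR (S m) - 1) * Rpower (1 - t) (INR (S m) - 1))
    (at_right 0) (at_point x) = beta_primitive m x.
Proof.
  intros Hx. apply is_RInt_gen_unique.
  replace (beta_primitive m x) with (beta_primitive m x - beta_primitive m 0)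
    by (unfold beta_primitive; rewrite primitive_0; ring).
  apply (is_RInt_gen_antiderivative _ (beta_primitive m)).
  - apply Filter_prod with (fun a => 0 < a < 1) (fun b => b = x).
    + exists (mkposreal 1 Rlt_0_1). intros a Ha Hpos.
      change (Rabs (a - 0) < 1) in Ha. rewrite Rminus_0_r in Ha.
      apply Rabs_lt_between in Ha. lra.
    + reflexivity.
    + intros a b Ha ->. cbn [fst snd]. apply (is_RInt_ext (fun t => (t * (1 - t)) ^ m)).
      * intros t Ht.
        pose proof (Rmin_glb_lt a x 0 (proj1 Ha) (proj1 Hx)).
        pose proof (Rmax_lub_lt a x 1 (proj2 Ha) (proj2 Hx)).
        rewrite S_INR, Rplus_minus_r, !Rpower_pow, Rpow_mult_distr by lra. reflexivity.
      * apply is_RInt_primitive, continuous_beta_integrand.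
  - eapply filterlim_filter_le_1; [apply filter_le_within|].
    apply continuous_primitive, continuous_beta_integrand.
  - intros P HP. now apply locally_singleton in HP.
Qed.

Lemma incBeta_nat m x : 0 < x < 1 ->
  incBeta x (INR (S m)) (INR (S m)) = INR (fact (2 * m + 1)) / INR (fact m) ^ 2 * beta_primitive m x.
Proof.
  intros Hx. unfold incBeta, Beta. rewrite RInt_gen_beta_integrand by exact Hx.
  replace (INR (S m) + INR (S m)) with (INR (S (2 * m + 1))) by (rewrite <- plus_INR; f_equal; lia).
  rewrite !Gamma_nat. pose proof (INR_fact_lt_0 m). pose proof (INR_fact_lt_0 (2 * m + 1)).
  field. lra.
Qed.

Definition eta_integrand (N : nat) (z : R) : R := exp (- (/ 2 * INR N * z ^ 2)) * phi z.

Definition eta_primitive (m : nat) (z : R) : R := 4 ^ S m / sqrt 2 * beta_primitive m (tpoint z).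

Lemma continuous_eta_integrand N z : continuous (eta_integrand N) z.
Proof.
  apply (continuous_mult (fun z => exp (- (/ 2 * INR N * z ^ 2))) phi).
  - apply ex_derive_continuous_R. auto_derive. auto.
  - apply continuous_phi.
Qed.

Lemma continuous_eta_primitive m z : continuous (eta_primitive m) z.
Proof.
  apply (continuous_scal_r (4 ^ S m / sqrt 2) (fun z => beta_primitive m (tpoint z))).
  apply (continuous_comp tpoint (beta_primitive m)); [apply continuous_tpoint|].
  apply continuous_primitive, continuous_beta_integrand.
Qed.

Lemma is_derive_eta_primitive m z : z <> 0 ->
  is_derive (eta_primitive m) z (eta_integrand (S m) z).
Proof.
  intros Hz. evar (d : R).
  assert (Hd : is_derive (eta_primitive m) z d).
  { apply is_derive_scal, (is_derive_comp (beta_primitive m) tpoint).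
    - apply is_derive_beta_primitive.
    - now apply is_derive_tpoint. }
  replace (eta_integrand (S m) z) with d; [exact Hd|].
  unfold d, eta_integrand. change (scal ?a ?b) with (a * b). rewrite tpoint_mul_one_sub.
  replace (- (/ 2 * INR (S m) * z ^ 2)) with (INR (S m) * - (/ 2 * z ^ 2)) by ring.
  unfold Rdiv. rewrite exp_mul_INR, Rpow_mult_distr, pow_inv.
  pose proof (sqrt_lt_R0 2 ltac:(lra)). pose proof (pow_lt 4 m ltac:(lra)).
  simpl pow. field. lra.
Qed.

Lemma is_lim_gauss_m_infty : is_lim (fun z => exp (- (/ 2 * z ^ 2))) m_infty 0.
Proof.
  assert (Hp : is_lim (fun x => exp (- (/ 2 * x ^ 2))) p_infty 0).
  { apply is_lim_p_infty_0_of_bound with 1. intros x Hx.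
    rewrite Rabs_right by apply Rle_ge, Rlt_le, exp_pos.
    rewrite exp_Ropp, Rdiv_1_l. apply Rinv_le_contravar; [lra|].
    pose proof (exp_ineq1_le (/ 2 * x ^ 2)). nra. }
  apply (is_lim_ext (fun z => exp (- (/ 2 * (- z) ^ 2)))); [intros z; do 3 f_equal; ring|].
  apply (is_lim_comp (fun x => exp (- (/ 2 * x ^ 2))) Ropp m_infty 0 p_infty Hp).
  - apply (is_lim_opp (fun z => z) m_infty m_infty), is_lim_id.
  - exists 0. intros. discriminate.
Qed.

Lemma is_lim_eta_primitive m : is_lim (eta_primitive m) m_infty 0.
Proof.
  set (h s := 4 ^ S m / sqrt 2 * beta_primitive m ((1 - sqrt (1 - s)) / 2)).
  apply (is_lim_ext_loc (fun z => h (exp (- (/ 2 * z ^ 2))))).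
  { exists 0. intros z Hz. unfold h, eta_primitive, tpoint, sign1, sroot.
    destruct (Rlt_dec z 0); [|lra]. do 3 f_equal. ring. }
  replace 0 with (h 0).
  2:{ unfold h, beta_primitive. rewrite Rminus_0_r, sqrt_1.
      replace ((1 - 1) / 2) with 0 by field. rewrite primitive_0. ring. }
  apply is_lim_comp_continuous; [apply is_lim_gauss_m_infty|].
  apply (continuous_scal_r (4 ^ S m / sqrt 2) (fun s => beta_primitive m ((1 - sqrt (1 - s)) / 2))).
  apply (continuous_comp (fun s => (1 - sqrt (1 - s)) / 2) (beta_primitive m)).
  - apply ex_derive_continuous_R. auto_derive. lra.
  - apply continuous_primitive, continuous_beta_integrand.
Qed.

Lemma is_RInt_gen_eta_integrand m x :
  is_RInt_gen (eta_integrand (S m)) (Rbar_locally m_infty) (at_point x) (eta_primitive m x).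
Proof.
  rewrite <- (Rminus_0_r (eta_primitive m x)).
  apply (is_RInt_gen_antiderivative _ (eta_primitive m)).
  - apply Filter_prod with (fun _ => True) (fun _ => True); try apply filter_true.
    intros a b _ _. apply (is_RInt_derive_punctured _ _ 0).
    + apply continuous_eta_primitive.
    + intros; now apply is_derive_eta_primitive.
    + apply continuous_eta_integrand.
  - apply is_lim_eta_primitive.
  - intros P HP. now apply locally_singleton in HP.
Qed.

Lemma tpoint_eta y eta : 0 < y < 1 -> - (/ 2 * eta ^ 2) = ln (4 * y * (1 - y)) ->
  (eta < 0 <-> / 2 < y) -> tpoint eta = 1 - y.
Proof.
  intros Hy Hln Hneg.
  assert (He : exp (- (/ 2 * eta ^ 2)) = 4 * y * (1 - y)) by (rewrite Hln; apply exp_ln; nra).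
  unfold tpoint, sign1, sroot. rewrite He.
  replace (1 - 4 * y * (1 - y)) with ((1 - 2 * y) ^ 2) by ring.
  destruct (Rlt_dec eta 0) as [Hn|Hn].
  - apply Hneg in Hn. rewrite <- Rsqr_pow2, sqrt_Rsqr_abs, Rabs_left by lra. field.
  - assert (y <= / 2) by (destruct (Rle_dec y (/ 2)); [assumption|]; exfalso; apply Hn, Hneg; lra).
    rewrite <- Rsqr_pow2, sqrt_Rsqr_abs, Rabs_right by lra. field.
Qed.

Lemma PhiN_nat m :
  PhiN (INR (S m))
  = INR (fact (2 * S m)) * sqrt PI / (4 ^ S m * INR (fact (S m)) * sqrt (INR (S m)) * INR (fact m)).
Proof.
  unfold PhiN. rewrite Gamma_nat_add_half, Gamma_nat.
  pose proof (INR_fact_lt_0 m). pose proof (INR_fact_lt_0 (S m)). pose proof (pow_lt 4 (S m)).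
  pose proof (sqrt_lt_R0 (INR (S m)) (lt_0_INR _ (Nat.lt_0_succ m))).
  field. repeat split; lra.
Qed.

Lemma inv_sqrt2 : / sqrt 2 = sqrt 2 / 2.
Proof. pose proof (sqrt_lt_R0 2 ltac:(lra)). rewrite <- (sqrt_sqrt 2) at 3 by lra. field. lra. Qed.

Lemma incBeta_constant m :
  INR (fact (2 * m + 1)) / INR (fact m) ^ 2
  = sqrt (INR (S m) / (2 * PI)) * PhiN (INR (S m)) * (4 ^ S m / sqrt 2).
Proof.
  rewrite PhiN_nat, sqrt_div_alt, sqrt_mult_alt by (pose proof PI_RGT_0; lra).
  replace (4 ^ S m / sqrt 2) with (4 ^ S m * (sqrt 2 / 2)) by (rewrite <- inv_sqrt2; reflexivity).
  replace (2 * S m)%nat with (S (2 * m + 1)) by lia. rewrite !fact_simpl, !mult_INR.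
  pose proof PI_RGT_0. pose proof (INR_fact_lt_0 m). pose proof (pow_lt 4 (S m) ltac:(lra)).
  pose proof (sqrt_lt_R0 2 ltac:(lra)). pose proof (sqrt_lt_R0 PI ltac:(lra)).
  pose proof (sqrt_lt_R0 (INR (S m)) (lt_0_INR _ (Nat.lt_0_succ m))).
  rewrite !S_INR, plus_INR, mult_INR in *. simpl INR. pose proof (pos_INR m).
  field. repeat split; lra.
Qed.

Theorem mainTheorem3 (N : nat) (y eta : R) :
  (1 <= N)%nat -> 0 < y < 1 ->
  - (/2 * eta ^ 2) = ln (4 * y * (1 - y)) ->
  (0 < eta <-> y < /2) -> (eta < 0 <-> /2 < y) ->
  exists J : R,
    is_RInt_gen (fun z => exp (- (/2 * INR N * z ^ 2)) * phi z)
      (Rbar_locally m_infty) (at_point eta) J /\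
    incBeta (1 - y) (INR N) (INR N)
      = sqrt (INR N / (2 * PI)) * PhiN (INR N) * J.
Proof.
  (* The sign condition for [eta > 0] follows from the other hypotheses. *)
  intros HN Hy Hln _ Hneg.
  destruct N as [|m]; [lia|].
  exists (eta_primitive m eta). split; [apply is_RInt_gen_eta_integrand|].
  rewrite incBeta_nat, incBeta_constant by lra.
  unfold eta_primitive. rewrite (tpoint_eta y eta) by assumption. ring.
Qed.
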